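(* Let $a>0$ and $n,k$ be integers with $1\le k\le n/2$, and put $u_0=a/k$. Let $a_0,\dots,a_n$ be integers. (A) Suppose there is a prime $p\ge k+2$ with $p\mid\prod_{i=1}^{k}(a+n-k+i)$, $p\nmid a_0a_n$, and $p\nmid\prod_{i=1}^{k}(a+i)$, and suppose that either $p\ge\min(2u_0,\,k+u_0)$, or ($p>2k$ and $p^2-p\ge a$). Then $f_{n,a}(x)$ has no factor of degree $k$ in $\mathbb{Q}[x]$. (B) Suppose there is a prime $p\ge k+2$ with $p\mid\prod_{i=1}^{k}(n-k+i)(a+n-k+i)$ and $p\nmid\prod_{i=1}^{k}(a+i)$, and suppose that either $p\ge\min(2u_0,\,k+u_0)$, or ($p>2k$ and $p^2-p\ge a$). Then $L_n^{(a)}(x)$ has no factor of degree $k$ in $\mathbb{Q}[x]$.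
   Context: Here $a$ is an integer. For integers $n\ge 1$, $a\ge 0$ and integers $a_0,\dots,a_n$, $f_{n,a}(x)=\sum_{j=0}^{n} a_j\frac{x^j}{(j+a)!}$. The generalised Laguerre polynomial is $L_n^{(\alpha)}(x)=\sum_{j=0}^{n}\frac{(n+\alpha)(n-1+\alpha)\cdots(j+1+\alpha)}{(n-j)!\,j!}(-x)^j$. *)

From HB Require Import structures.
From mathcomp Require Import all_boot all_order all_algebra.
Set Implicit Arguments. Unset Strict Implicit. Unset Printing Implicit Defensive.
Import Order.TTheory GRing.Theory Num.Theory.
Local Open Scope ring_scope.

Definition fna (n a : nat) (c : nat -> int) : {poly rat} :=
  \poly_(j < n.+1) ((c j)%:~R / ((j + a)`!)%:R).

Definition laguerre (n a : nat) : {poly rat} :=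
  \poly_(j < n.+1)
    ((-1) ^+ j * (\prod_(j.+1 <= i < n.+1) ((i + a)%N)%:R)
       / (((n - j)`! * j`!)%N)%:R).

Definition has_factor_of_degree (P : {poly rat}) (k : nat) : Prop :=
  exists g : {poly rat}, size g = k.+1 /\ (g %| P).

From HB Require Import structures.
From mathcomp Require Import all_boot all_order all_algebra.
From mathcomp Require Import zify ring.
Set Implicit Arguments. Unset Strict Implicit. Unset Printing Implicit Defensive.
Import Order.TTheory GRing.Theory Num.Theory.

(* The argument is a Newton polygon argument at the prime p.  For a
   polynomial P = g * q with weights w(i) = t v_p(P_i) + s i (t > 0), the
   minimal weight of P is the sum of the minimal weights of g and q (a
   Gauss lemma for weighted valuations, [wval_mul_min]).  Applied with two
   slopes this gives a criterion [newton_no_factor]: if the points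
   (j, v_p(P_j)) lie strictly above the line of slope -1/k through the
   constant term, and v_p(P_n) is minimal, strictly for j < n - l with
   l < k, then P has no factor of degree k.

   For f_{n,a}, v_p(P_j) = v_p(a_j) - v_p((j + a)!), and the low-end
   condition reduces to the estimate k (v_p((a + j)!) - v_p(a!)) < j
   [vfact_increment], proved from Legendre's recursion under the size
   condition on p; the high-end condition comes from the multiple of p
   among a + n - k + 1, ..., a + n.  This gives a criterion for f_{n,a}
   [fna_no_factor], from which part (A) follows directly and part (B)
   follows since L_n^(a) is (n + a)!/n! times f_{n,a} with
   a_j = (-1)^j C(n, j) [laguerre_fna]. *)

Section PadicValuation.
Local Open Scope ring_scope.
Variable p : nat.
Hypothesis p_pr : prime p.

(* The exponent of p in an integer; by convention zval 0 = 0. *)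
Definition zval (z : int) : int := (logn p `|z|%N)%:Z.

Definition qval (x : rat) : int := zval (numq x) - zval (denq x).

Lemma zval_ge0 z : 0 <= zval z. Proof. by []. Qed.

Lemma zvalM z w : z != 0 -> w != 0 -> zval (z * w) = zval z + zval w.
Proof. by move=> hz hw; rewrite /zval abszM lognM ?absz_gt0. Qed.

Lemma zvalN z : zval (- z) = zval z. Proof. by rewrite /zval abszN. Qed.

Lemma zval_sign_nat (j m : nat) : zval ((-1) ^+ j * m%:Z) = (logn p m)%:Z.
Proof. by rewrite /zval -signr_odd abszMsign. Qed.

Lemma zval_ndvd z : ~~ (p%:Z %| z)%Z -> zval z = 0.
Proof. by move=> h; rewrite /zval logn_coprime // prime_coprime. Qed.

Lemma zvalD (m : nat) z w : z + w != 0 ->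
  m%:Z <= zval z -> m%:Z <= zval w -> m%:Z <= zval (z + w).
Proof.
rewrite /zval !lez_nat => hzw hz hw.
have dvd_pm x : (m <= logn p `|x|)%N -> ((p ^ m)%:Z %| x)%Z.
  move=> hx; apply: dvdn_trans (pfactor_dvdnn p _); exact: dvdn_exp2l.
have : ((p ^ m)%:Z %| z + w)%Z by apply: rpredD; apply: dvd_pm.
by rewrite -pfactor_dvdn ?absz_gt0.
Qed.

Lemma qval_frac (N D : int) : N != 0 -> D != 0 ->
  qval (N%:~R / D%:~R) = zval N - zval D.
Proof.
move=> hN hD; set x := _ / _.
have hx : x != 0 by rewrite mulf_eq0 invr_eq0 !intr_eq0 negb_or hN hD.
have e : numq x * D = N * denq x.
  apply: (@intr_inj rat); rewrite !rmorphM /= numqE /x.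
  by field; rewrite intr_eq0.
have := congr1 zval e; rewrite !zvalM ?numq_eq0 ?denq_neq0 // /qval.
by lia.
Qed.

Lemma qvalM x y : x != 0 -> y != 0 -> qval (x * y) = qval x + qval y.
Proof.
move=> hx hy; rewrite -[x]divq_num_den -[y]divq_num_den.
have -> : (numq x)%:~R / (denq x)%:~R * ((numq y)%:~R / (denq y)%:~R) =
    (numq x * numq y)%:~R / (denq x * denq y)%:~R :> rat.
  by rewrite !rmorphM /= invfM; ring.
rewrite !qval_frac ?mulf_neq0 ?numq_eq0 ?denq_neq0 //.
by rewrite !zvalM ?numq_eq0 ?denq_neq0 //; lia.
Qed.

Lemma qvalN x : qval (- x) = qval x.
Proof. by rewrite /qval numqN denqN zvalN. Qed.

Lemma qval_int_frac (z : int) (m : nat) : z != 0 -> (0 < m)%N ->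
  qval (z%:~R / m%:R) = zval z - (logn p m)%:Z.
Proof.
move=> hz hm; rewrite -[m%:R]/((m%:Z)%:~R : rat) qval_frac //.
by rewrite -lt0n.
Qed.

Lemma qvalD x y (c : int) : x != 0 -> y != 0 -> x + y != 0 ->
  c <= qval x -> c <= qval y -> c <= qval (x + y).
Proof.
move=> hx hy hxy; rewrite /qval.
set nx := numq x; set dx := denq x; set ny := numq y; set dy := denq y.
have hnx : nx != 0 by rewrite numq_eq0.
have hny : ny != 0 by rewrite numq_eq0.
have hdx : dx != 0 by rewrite denq_neq0.
have hdy : dy != 0 by rewrite denq_neq0.
have E : x + y = (nx * dy + ny * dx)%:~R / (dx * dy)%:~R :> rat.
  rewrite -{1}(divq_num_den x) -{1}(divq_num_den y) -/nx -/dx -/ny -/dy.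
  by rewrite !rmorphD !rmorphM /= invfM; field; rewrite !intr_eq0 !denq_neq0.
have hnz : nx * dy + ny * dx != 0 by apply: contraNneq hxy => h; rewrite E h mul0r.
rewrite -/(qval _) E qval_frac ?mulf_neq0 // !zvalM // => hcx hcy.
have vxy := zvalM hnx hdy; have vyx := zvalM hny hdx.
have [hc|hc] := lerP (c + zval dx + zval dy) 0.
  by have := zval_ge0 (nx * dy + ny * dx); lia.
have [m em] : exists m : nat, c + zval dx + zval dy = m%:Z.
  by exists (absz (c + zval dx + zval dy)); rewrite gez0_abs //; lia.
have : m%:Z <= zval (nx * dy + ny * dx) by apply: zvalD => //; lia.
by lia.
Qed.

Lemma qval_dom x y : x != 0 -> (y == 0) || (qval x < qval y) ->
  (x + y != 0) /\ qval (x + y) = qval x.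
Proof.
move=> hx /orP [/eqP -> | hy]; first by rewrite addr0.
have [-> | y0] := eqVneq y 0; first by rewrite addr0.
have hxy : x + y != 0.
  apply: contraTneq hy => /eqP; rewrite addr_eq0 => /eqP ->.
  by rewrite qvalN ltxx.
split => //; apply/eqP; rewrite eq_le qvalD ?(ltW hy) // andbT leNgt.
apply/negP => hlt.
have : qval x + 1 <= qval ((x + y) + - y).
  by apply: qvalD; rewrite ?oppr_eq0 ?addrK ?qvalN ?lezD1.
by rewrite addrK; lia.
Qed.

Lemma qval_sum_gt x (I : Type) (r : seq I) (P : pred I) (F : I -> rat) :
  (forall i, P i -> F i != 0 -> qval x < qval (F i)) ->
  (\sum_(i <- r | P i) F i == 0) || (qval x < qval (\sum_(i <- r | P i) F i)).
Proof.
move=> hF; apply: (big_rec (fun s => (s == 0) || (qval x < qval s))) => [|i s Pi].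
  by rewrite eqxx.
have [-> | Fi0] := eqVneq (F i) 0; first by rewrite add0r.
move=> /orP [/eqP -> | hs]; first by rewrite addr0 hF ?orbT.
have [-> | s0] := eqVneq s 0; first by rewrite addr0 hF ?orbT.
have [-> // | his] := eqVneq (F i + s) 0.
by rewrite -lezD1 qvalD // ?lezD1 ?hF ?orbT.
Qed.

End PadicValuation.

Lemma smallest_minimizer (N : nat) (P : pred nat) (f : nat -> int) :
  (exists2 i, (i < N)%N & P i) ->
  exists i, [/\ (i < N)%N, P i, (forall j, (j < N)%N -> P j -> (f i <= f j)%R)
                & (forall j, (j < i)%N -> P j -> (f i < f j)%R)].
Proof.
move=> [i0 hi0 Pi0].
pose Po (i : 'I_N) := P i.
have [i1 Pi1 min_i1] := @arg_minP _ _ _ (Ordinal hi0) Po (fun i => f i) Pi0.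
pose Q j := [&& (j < N)%N, P j & (f j <= f i1)%R].
have exQ : exists j, Q j by exists i1; rewrite /Q ltn_ord lexx andbT.
case: (ex_minnP exQ) => i /and3P [hiN Pi fi] min_i.
have min_f j : (j < N)%N -> P j -> (f i <= f j)%R.
  by move=> hj Pj; apply: le_trans fi (min_i1 (Ordinal hj) Pj).
exists i; split => // j hji Pj; rewrite ltNge; apply/negP => hfj.
have hjN : (j < N)%N by apply: ltn_trans hiN.
by have := min_i j; rewrite /Q hjN Pj (le_trans hfj fi) leqNgt hji => /(_ isT).
Qed.

Section NewtonPolygon.
Local Open Scope ring_scope.
Variable p : nat.
Hypothesis p_pr : prime p.

(* The weight t * v_p(P_i) + s * i of the i-th coefficient of P: for t > 0,
   minimizing it over the nonzero coefficients finds the vertices of the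
   Newton polygon of P supporting a line of slope -s/t. *)
Definition wval (t s : int) (P : {poly rat}) (i : nat) : int :=
  t * qval p P`_i + s * i%:Z.

Lemma coef_nz_lt (P : {poly rat}) i : P`_i != 0 -> (i < size P)%N.
Proof. by apply: contraNT; rewrite -leqNgt => h; rewrite nth_default. Qed.

Lemma poly_has_nz_coef (P : {poly rat}) : P != 0 ->
  exists2 i, (i < size P)%N & P`_i != 0.
Proof.
move=> hP; exists (size P).-1; last by rewrite -lead_coefE lead_coef_eq0.
by rewrite prednK // lt0n size_poly_eq0.
Qed.

(* Gauss's lemma for weighted valuations: the minimal weight of G * H is
   attained at i0 + j0, where i0 and j0 are the smallest indices at which
   the weights of G and of H are minimal. *)
Lemma wval_mul_min (t s : int) (G H : {poly rat}) : 0 < t -> G != 0 -> H != 0 ->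
  exists i0 j0, [/\ G`_i0 != 0, H`_j0 != 0,
    (forall i, G`_i != 0 -> wval t s G i0 <= wval t s G i),
    (forall j, H`_j != 0 -> wval t s H j0 <= wval t s H j)
    & (G * H)`_(i0 + j0) != 0 /\
      wval t s (G * H) (i0 + j0) = wval t s G i0 + wval t s H j0].
Proof.
move=> ht hG hH.
have [i0 [_ Gi0 minG ltG]] :=
  @smallest_minimizer (size G) (fun i => G`_i != 0) (wval t s G) (poly_has_nz_coef hG).
have [j0 [_ Hj0 minH ltH]] :=
  @smallest_minimizer (size H) (fun j => H`_j != 0) (wval t s H) (poly_has_nz_coef hH).
have {}minG i : G`_i != 0 -> wval t s G i0 <= wval t s G i.
  by move=> Gi; apply: minG (coef_nz_lt Gi) Gi.
have {}minH j : H`_j != 0 -> wval t s H j0 <= wval t s H j.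
  by move=> Hj; apply: minH (coef_nz_lt Hj) Hj.
have hx : G`_i0 * H`_j0 != 0 by rewrite mulf_neq0.
have hi0 : (i0 < (i0 + j0).+1)%N by rewrite ltnS leq_addr.
(* every other term of the convolution has a strictly larger weight *)
have other_terms (i : 'I_(i0 + j0).+1) : i != Ordinal hi0 ->
    G`_i * H`_(i0 + j0 - i) != 0 ->
    qval p (G`_i0 * H`_j0) < qval p (G`_i * H`_(i0 + j0 - i)).
  move=> hi; rewrite mulf_eq0 negb_or => /andP [Gi Hk].
  set k := (i0 + j0 - i)%N in Hk *.
  have eik : (i + k = i0 + j0)%N by rewrite subnKC // -ltnS.
  have ww : wval t s G i0 + wval t s H j0 < wval t s G i + wval t s H k.
    have : i != i0 :> nat by apply: contraNneq hi => e; apply/eqP/val_inj.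
    case: ltngtP => // hlt _.
    - by apply: ltr_leD; [exact: ltG | exact: minH].
    - by apply: ler_ltD; [exact: minG | apply: ltH => //; lia].
  rewrite !qvalM // -(ltr_pM2l ht).
  have es : s * i%:Z + s * k%:Z = s * i0%:Z + s * j0%:Z.
    by rewrite -!mulrDr -!PoszD eik.
  by move: ww; rewrite /wval !mulrDr; lia.
have [nz hv] : (G * H)`_(i0 + j0) != 0 /\
    qval p (G * H)`_(i0 + j0) = qval p (G`_i0 * H`_j0).
  rewrite coefM (bigD1 (Ordinal hi0)) //= addKn.
  by apply: qval_dom => //; apply: qval_sum_gt other_terms.
exists i0, j0; split => //; split => //.
by rewrite /wval hv qvalM // PoszD; ring.
Qed.

Lemma wval_factor_bound (t s l : int) (P g q : {poly rat}) (e1 e2 : nat) :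
  0 < t -> P = g * q -> P`_(e1 + e2) = g`_e1 * q`_e2 ->
  g`_e1 != 0 -> q`_e2 != 0 ->
  (forall j, P`_j != 0 -> wval t s P (e1 + e2) <= wval t s P j + l) ->
  forall i, g`_i != 0 -> wval t s g e1 <= wval t s g i + l.
Proof.
move=> ht hP he ge qe hmin i gi.
have g0 : g != 0 by apply: contraNneq ge => ->; rewrite coef0.
have q0 : q != 0 by apply: contraNneq qe => ->; rewrite coef0.
have [i0 [j0 [_ _ minG minH [nz hw]]]] := wval_mul_min s ht g0 q0.
have wP : wval t s P (e1 + e2) = wval t s g e1 + wval t s q e2.
  by rewrite /wval he qvalM // PoszD; ring.
rewrite -hP in nz hw; have := hmin _ nz.
by have := minG i gi; have := minH e2 qe; lia.
Qed.

(* The first condition forces v_p(g_0) <= v_p(g_k) for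
   a factor g of degree k; the second forces n v_p(g_k) + k <= n v_p(g_0) + l. *)
Lemma newton_no_factor (P : {poly rat}) (n k l : nat) :
  size P = n.+1 -> (l < k)%N -> P`_0 != 0 ->
  (forall j, (0 < j <= n)%N -> P`_j != 0 ->
     k%:Z * (qval p P`_0 - qval p P`_j) < j%:Z) ->
  (forall j, (j <= n)%N -> P`_j != 0 -> qval p P`_n <= qval p P`_j) ->
  (forall j, (j + l < n)%N -> P`_j != 0 -> qval p P`_n < qval p P`_j) ->
  ~ has_factor_of_degree P k.
Proof.
move=> hs hlk P0 low high high_strict [g [hg /dvdpP [q hP]]].
have P_nz : P != 0 by rewrite -size_poly_eq0 hs.
have q_nz : q != 0 by apply: contraNneq P_nz => e; rewrite hP e mul0r.
have g_nz : g != 0 by rewrite -size_poly_eq0 hg.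
have {hP} hP : P = g * q by rewrite hP mulrC.
set m := (size q).-1.
have sq : size q = m.+1 by rewrite /m prednK // size_poly_gt0.
have hn : n = (k + m)%N.
  by have := size_mul g_nz q_nz; rewrite -hP hs hg sq; lia.
have P0_eq : P`_(0 + 0) = g`_0 * q`_0 by rewrite hP coef0M.
have Pn_eq : P`_(k + m) = g`_k * q`_m.
  by have := lead_coefM g q; rewrite -hP !lead_coefE hs hg -hn.
have [g0 q0] : g`_0 != 0 /\ q`_0 != 0.
  by apply/andP; rewrite -negb_or -mulf_eq0 -P0_eq add0n.
have gk : g`_k != 0 by move: g_nz; rewrite -lead_coef_eq0 lead_coefE hg.
have qm : q`_m != 0 by move: q_nz; rewrite -lead_coef_eq0 lead_coefE sq.
have k_gt0 : (0 < k)%N by lia.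
(* low end, weights of slope -(n-1)/(kn): v_p(g_0) <= v_p(g_k) *)
have low_g : qval p g`_0 <= qval p g`_k.
  have t_gt0 : 0 < (k * n)%N%:Z by rewrite ltz_nat muln_gt0 k_gt0; lia.
  have : wval (k * n)%N (n.-1)%N g 0 <= wval (k * n)%N (n.-1)%N g k + 0.
    apply: (wval_factor_bound t_gt0 hP P0_eq g0 q0 _ gk) => j Pj.
    have := coef_nz_lt Pj; rewrite hs ltnS /wval add0n.
    case: (posnP j) => [-> | j_gt0 jn]; first by lia.
    by have := low j; rewrite j_gt0 jn => /(_ isT Pj); nia.
  by rewrite /wval; nia.
(* high end, weights of slope -1/n: n v_p(g_k) + k <= n v_p(g_0) + l *)
have : wval n 1 g k <= wval n 1 g 0 + l.
  apply: (wval_factor_bound _ hP Pn_eq gk qm _ g0); first by rewrite ltz_nat; lia.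
  move=> j Pj; have := coef_nz_lt Pj; rewrite hs ltnS /wval -hn => jn.
  have := high j jn Pj; have := high_strict j.
  case: (ltnP (j + l) n) => [jl /(_ isT Pj) | jl _]; nia.
by rewrite /wval; nia.
Qed.

End NewtonPolygon.

Section Legendre.
Variable p : nat.
Hypothesis p_pr : prime p.

Definition vfact (m : nat) : nat := logn p m`!.

Lemma vfact0 : vfact 0 = 0. Proof. by rewrite /vfact fact0 logn1. Qed.

Lemma vfactS m : vfact m.+1 = logn p m.+1 + vfact m.
Proof. by rewrite /vfact factS lognM // fact_gt0. Qed.

Lemma vfact_rec m : vfact m = m %/ p + vfact (m %/ p).
Proof.
have p_gt0 := prime_gt0 p_pr.
elim: m => [|m IH]; first by rewrite div0n vfact0.
rewrite vfactS divnS //; have [pm | npm] := boolP (p %| m.+1); last first.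
  by rewrite IH logn_coprime // prime_coprime.
have q_eq : m.+1 %/ p = (m %/ p).+1 by rewrite divnS // pm.
have m1_eq : m.+1 = p * (m %/ p).+1 by rewrite -q_eq mulnC divnK.
by rewrite add1n {1}m1_eq lognM // (logn_prime _ p_pr) eqxx vfactS IH; lia.
Qed.

Lemma vfact_small m : m < p -> vfact m = 0.
Proof. by move=> h; rewrite vfact_rec divn_small // vfact0. Qed.

Lemma vfact_mono m m' : m <= m' -> vfact m <= vfact m'.
Proof.
move=> h; apply: dvdn_leq_log; first exact: fact_gt0.
by rewrite (fact_split h) dvdn_mulr.
Qed.

Lemma vfact_step x y : p %| x -> y < x -> vfact y < vfact x.
Proof.
case: x => // x px; rewrite ltnS vfactS => yx.
have : 0 < logn p x.+1 by rewrite -pfactor_dvdn // expn1.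
by have := vfact_mono yx; lia.
Qed.

(* Going up by at least p passes a multiple of p. *)
Lemma vfact_multiple x y : x + p <= y -> vfact x < vfact y.
Proof.
move=> h; have p_gt0 := prime_gt0 p_pr.
apply: leq_trans (vfact_step (dvdn_mull (x %/ p).+1 (dvdnn p)) _) (vfact_mono _).
  by rewrite ltn_ceil.
by have := leq_divM x p; lia.
Qed.

Lemma vfact_bound M : 0 < M -> (p - 1) * vfact M <= M - 1.
Proof.
have p_gt1 := prime_gt1 p_pr.
elim: M {-2}M (leqnn M) => [|N IH] M hM M_gt0; first by lia.
rewrite vfact_rec; have [-> | q_gt0] := posnP (M %/ p); first by rewrite vfact0; lia.
have hq : M %/ p <= N by have := ltn_Pdiv p_gt1 M_gt0; lia.
by have := IH _ hq q_gt0; have := leq_divM M p; nia.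
Qed.

Lemma logn_bin n j : j <= n -> logn p 'C(n, j) + vfact j + vfact (n - j) = vfact n.
Proof.
move=> h; rewrite /vfact -(bin_fact h) !lognM ?muln_gt0 ?fact_gt0 ?bin_gt0 //.
by rewrite addnA.
Qed.

End Legendre.

(* The size hypothesis of the theorem, in integer form: p >= 2a/k, or
   p >= k + a/k, or (p > 2k and a <= p^2 - p). *)
Definition size_condition (p a k : nat) : Prop :=
  ((2 * a <= k * p) \/ (k * k + a <= k * p)) \/ ((2 * k < p) /\ (a <= p ^ 2 - p)).

Section SizeCondition.
Local Open Scope ring_scope.

Lemma size_condition_rat (a k p : nat) : (0 < k)%N ->
  Num.min (2 * (a%:R / k%:R)) (k%:R + a%:R / k%:R) <= p%:R :> rat ->
  ((2 * a <= k * p) \/ (k * k + a <= k * p))%N.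
Proof.
move=> k_gt0; have k_pos : (0 : rat) < k%:R by rewrite ltr0n.
have k_nz : (k%:R : rat) != 0 by rewrite gt_eqF.
rewrite ge_min => /orP [] h; [left | right]; rewrite -(ler_nat rat).
  have -> : (2 * a)%N%:R = 2 * (a%:R / k%:R) * k%:R :> rat by rewrite natrM; field.
  by rewrite natrM (mulrC k%:R) ler_pM2r.
have -> : (k * k + a)%N%:R = (k%:R + a%:R / k%:R) * k%:R :> rat.
  by rewrite natrD natrM; field.
by rewrite natrM (mulrC k%:R) ler_pM2r.
Qed.

End SizeCondition.

Lemma residue_room p a k : 0 < p -> (forall i, 0 < i <= k -> ~~ (p %| a + i)) ->
  a %% p + k < p.
Proof.
move=> p_gt0 hnd; rewrite ltnNge; apply/negP => hk.
have r_lt := ltn_pmod a p_gt0.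
have := hnd (p - a %% p); rewrite subn_gt0 r_lt => /(_ ltac:(lia)).
have -> : a + (p - a %% p) = (a %/ p).+1 * p.
  by rewrite mulSn {1}(divn_eq a p); lia.
by rewrite dvdn_mull.
Qed.

(* The arithmetic core of the case p >= k + a/k: if Q p <= k (p - k) and
   r + k < p, then Q + r <= (p - Q)(p - k - 1). *)
Lemma quot_room p k Q r : 0 < k -> k + 2 <= p -> r + k < p ->
  Q * p <= k * (p - k) -> Q + r <= (p - Q) * (p - k - 1).
Proof.
move=> k_gt0 kp rk; set s := p - k - 1.
have -> : p = k + s + 1 by rewrite /s; lia.
rewrite (_ : k + s + 1 - k = s + 1); last by lia.
move=> hQ; have Qp : Q <= k + s + 1 by nia.
by rewrite mulnBl; nia.
Qed.

Lemma size_condition_quot p a k : 0 < k -> k + 2 <= p -> a %% p + k < p ->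
  size_condition p a k ->
  a %/ p < p /\
  ((a %/ p + a %% p <= (p - a %/ p) * (p - k - 1))
   \/ (2 * k < p /\ (a %/ p = p.-1 -> a %% p = 0))).
Proof.
move=> k_gt0 kp rk; have := divn_eq a p.
move: (a %/ p) (a %% p) rk => Q r rk a_eq.
rewrite /size_condition a_eq expnS expn1 => -[[h|h] | [pk h]].
- have Qk : 2 * Q <= k by nia.
  by split; [lia | left; nia].
- have Qp : Q * p <= k * (p - k) by rewrite mulnBr; lia.
  by split; [nia | left; apply: quot_room].
- by split; [nia | right; split => // eQ; move: h; rewrite eQ; nia].
Qed.

(* With M = Q + d (d > 0) the quotient of a + j by p: the extra valuation
   k v_p(M!) and the remainder r fit into the d (p - k) available slots. *)
Lemma gap_bound p k Q r d : prime p -> 0 < d -> Q < p -> r + k < p ->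
  (Q + r <= (p - Q) * (p - k - 1)) \/ (2 * k < p /\ (Q = p.-1 -> r = 0)) ->
  k * vfact p (Q + d) + r < d * (p - k).
Proof.
move=> p_pr d_gt0 Qp rk hQ.
have [small | large] := ltnP (Q + d) p.
  by rewrite vfact_small // muln0 add0n; nia.
have bound := vfact_bound p_pr (leq_trans (prime_gt0 p_pr) large).
have dQ : p - Q <= d by lia.
case: hQ => [hQ | [pk hr]].
- have : k * vfact p (Q + d) <= (p - 1) * vfact p (Q + d) by rewrite leq_mul2r; lia.
  have : (p - Q) * (p - k - 1) <= d * (p - k - 1) by rewrite leq_mul2r dQ orbT.
  by nia.
- have : 2 * k * vfact p (Q + d) <= (p - 1) * vfact p (Q + d).
    by rewrite leq_mul2r; lia.
  by nia.
Qed.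

Lemma vfact_increment p a k j : prime p -> 0 < k -> k + 2 <= p ->
  (forall i, 0 < i <= k -> ~~ (p %| a + i)) -> size_condition p a k -> 0 < j ->
  k * (vfact p (a + j) - vfact p a) < j.
Proof.
move=> p_pr k_gt0 kp hnd hsize j_gt0; have p_gt0 := prime_gt0 p_pr.
have rk := residue_room p_gt0 hnd.
have [Qp hQ] := size_condition_quot k_gt0 kp rk hsize.
have va : vfact p a = a %/ p by rewrite vfact_rec // (vfact_small p_pr Qp) addn0.
have vaj := vfact_rec p_pr (a + j).
have Mp := leq_divM (a + j) p; have a_eq := divn_eq a p.
have QM : a %/ p <= (a + j) %/ p by rewrite leq_div2r // leq_addr.
rewrite va vaj; move: vaj Mp a_eq QM hQ Qp rk.
move: ((a + j) %/ p) (a %/ p) (a %% p) => M Q r _ Mp a_eq QM hQ Qp rk.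
have [-> | QM'] := eqVneq M Q; first by rewrite (vfact_small p_pr Qp) addn0 subnn muln0.
have [d d_gt0 eM] : exists2 d, 0 < d & M = Q + d by exists (M - Q); lia.
subst M.
have gap : k * vfact p (Q + d) + r < d * (p - k) by apply: gap_bound.
have dp : d * p <= r + j by move: Mp; rewrite a_eq mulnDl; lia.
have edp : d * p = k * d + d * (p - k) by rewrite (mulnC k d) -mulnDr subnKC //; lia.
by rewrite -addnA addKn mulnDr; lia.
Qed.

Section Criterion.
Local Open Scope ring_scope.
Variables (p n a : nat) (c : nat -> int).
Hypothesis p_pr : prime p.

Lemma coef_fna j : (j <= n)%N -> (fna n a c)`_j = (c j)%:~R / ((j + a)`!)%:R.
Proof. by move=> hj; rewrite coef_poly ltnS hj. Qed.

Lemma coef_fna_eq0 j : (j <= n)%N -> ((fna n a c)`_j == 0) = (c j == 0).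
Proof.
move=> hj; rewrite coef_fna // mulf_eq0 invr_eq0 intr_eq0 pnatr_eq0.
by rewrite eqn0Ngt fact_gt0 orbF.
Qed.

Lemma qval_coef_fna j : (j <= n)%N -> c j != 0 ->
  qval p (fna n a c)`_j = zval p (c j) - (vfact p (j + a))%:Z.
Proof. by move=> hj hc; rewrite coef_fna // qval_int_frac // fact_gt0. Qed.

Lemma fna_no_factor (k l : nat) : (0 < k)%N -> (k + 2 <= p)%N -> (l < k)%N ->
  (forall i, (0 < i <= k)%N -> ~~ (p %| a + i)%N) -> size_condition p a k ->
  c 0%N != 0 -> zval p (c 0%N) = 0 -> c n != 0 ->
  (forall j, (j <= n)%N -> c j != 0 ->
     zval p (c n) + (vfact p (j + a))%:Z <= zval p (c j) + (vfact p (n + a))%:Z) ->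
  (forall j, (j + l < n)%N -> c j != 0 ->
     zval p (c n) + (vfact p (j + a))%:Z < zval p (c j) + (vfact p (n + a))%:Z) ->
  ~ has_factor_of_degree (fna n a c) k.
Proof.
move=> k_gt0 kp lk hnd hsize c0 vc0 cn high high_strict.
have cnz j : (j <= n)%N -> (fna n a c)`_j != 0 -> c j != 0.
  by move=> hj; rewrite coef_fna_eq0.
apply: (newton_no_factor p_pr _ lk).
- by apply: size_poly_eq; rewrite -coef_fna // coef_fna_eq0.
- by rewrite coef_fna_eq0.
- move=> j /andP [j_gt0 hj] /(cnz _ hj) cj.
  rewrite !qval_coef_fna // vc0 add0n.
  have := vfact_increment p_pr k_gt0 kp hnd hsize j_gt0.
  have := zval_ge0 p (c j); have := vfact_mono p (leq_addr j a).
  by rewrite (addnC j a); nia.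
- move=> j hj /(cnz _ hj) cj; rewrite !qval_coef_fna //.
  by have := high j hj cj; lia.
- move=> j hj /(cnz _ (ltnW (leq_ltn_trans (leq_addr l j) hj))) cj.
  rewrite !qval_coef_fna //; first by have := high_strict j hj cj; lia.
  by have := leq_addr l j; lia.
Qed.

End Criterion.

Lemma prime_dvd_prod p k (F : nat -> nat) : prime p ->
  reflect (exists2 i, 0 < i <= k & p %| F i) (p %| \prod_(1 <= i < k.+1) F i).
Proof.
move=> p_pr; rewrite Euclid_dvd_prod // big_has.
apply: (iffP hasP) => [] [i hi hF]; exists i => //; move: hi;
  by rewrite mem_index_iota ltnS.
Qed.

Lemma vfact_top_strict p a n k i0 j : prime p -> p %| a + (n - k) + i0 ->
  0 < i0 <= k -> k <= n -> j + (k - i0) < n -> vfact p (j + a) < vfact p (n + a).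
Proof.
move=> p_pr hdvd hi0 kn hj.
apply: leq_trans (vfact_step p_pr hdvd _) (vfact_mono p _); lia.
Qed.

(* In the Laguerre case the multiple of p may also be among n - k + 1, ..., n,
   where it raises v_p(C(n, j)) instead, unless p <= n - j. *)
Lemma laguerre_top_strict p a n k i0 j : prime p ->
  p %| (n - k + i0) * (a + (n - k) + i0) ->
  0 < i0 <= k -> k <= n -> j + (k - i0) < n ->
  vfact p (j + a) < logn p 'C(n, j) + vfact p (n + a).
Proof.
move=> p_pr hdvd hi0 kn hj.
have vmono : vfact p (j + a) <= vfact p (n + a) by apply: vfact_mono; lia.
rewrite Euclid_dvdM // in hdvd; case/orP: hdvd => hdvd; last first.
  by have := vfact_top_strict p_pr hdvd hi0 kn hj; lia.
have [pnj | npj] := leqP p (n - j).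
  by have := vfact_multiple p_pr (_ : j + a + p <= n + a); lia.
have vbin := logn_bin p (_ : j <= n).
have := vfact_step p_pr hdvd (_ : j < n - k + i0).
have := vfact_mono p (_ : n - k + i0 <= n).
by have := vfact_small p_pr npj; lia.
Qed.

Lemma has_factor_scale (x : rat) (P : {poly rat}) k : (x != 0)%R ->
  has_factor_of_degree (x *: P) k -> has_factor_of_degree P k.
Proof. by move=> x_nz [g [hg hdvd]]; exists g; rewrite -(dvdpZr _ _ x_nz). Qed.

Lemma fact_shift_prod n a j : j <= n ->
  (j + a)`! * \prod_(j.+1 <= i < n.+1) (i + a) = (n + a)`!.
Proof.
elim: n => [|n IH] hj; first by move: hj; rewrite leqn0 => /eqP ->; rewrite big_geq // muln1.
have [jn | nj] := ltnP j n.+1; last first.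
  have -> : j = n.+1 by apply/eqP; rewrite eqn_leq hj nj.
  by rewrite big_geq // muln1.
by rewrite big_nat_recr //= mulnA IH // addSn factS mulnC.
Qed.

Section Laguerre.
Local Open Scope ring_scope.

Lemma laguerre_fna n a : laguerre n a =
  ((n + a)`!%:R / n`!%:R) *: fna n a (fun j => (-1) ^+ j * ('C(n, j))%:Z).
Proof.
apply/polyP => j; rewrite coefZ !coef_poly; case: ltnP => // jn; last by rewrite mulr0.
rewrite ltnS in jn.
have fact_nz m : (m`!)%:R != 0 :> rat by rewrite pnatr_eq0 -lt0n fact_gt0.
have e1 := congr1 (fun m => m%:R : rat) (fact_shift_prod a jn).
have e2 := congr1 (fun m => m%:R : rat) (bin_fact jn).
rewrite /= !natrM in e1 e2; rewrite -e1 -e2 natr_prod !natrM intrM intr_sign.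
rewrite -[('C(n, j))%:Z%:~R]/('C(n, j)%:R : rat).
by field; rewrite !fact_nz pnatr_eq0 -lt0n bin_gt0 jn.
Qed.

End Laguerre.

Section Parts.
Local Open Scope ring_scope.
Variables (a n k p : nat).
Hypotheses (p_pr : prime p) (k_gt0 : (0 < k)%N) (kn : (k <= n)%N).
Hypotheses (kp : (k + 2 <= p)%N) (hsize : size_condition p a k).
Hypothesis no_carry : ~~ (p %| \prod_(1 <= i < k.+1) (a + i))%N.

Let no_carry_i i : (0 < i <= k)%N -> ~~ (p %| a + i)%N.
Proof.
move=> hi; apply: contra no_carry => hdvd.
by apply/(prime_dvd_prod _ _ p_pr); exists i.
Qed.

Lemma fna_no_factor_of_degree (c : nat -> int) :
  (p %| \prod_(1 <= i < k.+1) (a + (n - k) + i))%N ->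
  ~~ (p%:Z %| c 0%N * c n)%Z ->
  ~ has_factor_of_degree (fna n a c) k.
Proof.
move=> /(prime_dvd_prod _ _ p_pr) [i0 hi0 hdvd] hc.
have hc0 : ~~ (p%:Z %| c 0%N)%Z by apply: contra hc; apply: dvdz_mulr.
have hcn : ~~ (p%:Z %| c n)%Z by apply: contra hc; apply: dvdz_mull.
have c_nz j : ~~ (p%:Z %| c j)%Z -> c j != 0 by apply: contraNneq => ->; apply: dvdz0.
have [i0_gt0 _] := andP hi0.
apply: (fna_no_factor (l := (k - i0)%N) p_pr k_gt0 kp _ no_carry_i hsize
          (c_nz _ hc0) (zval_ndvd p_pr hc0) (c_nz _ hcn)).
- by rewrite ltn_subrL i0_gt0.
- move=> j jn _; rewrite (zval_ndvd p_pr hcn) add0r.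
  by apply: ler_wpDl (zval_ge0 _ _) _; rewrite lez_nat vfact_mono ?leq_add2r.
- move=> j hj _; rewrite (zval_ndvd p_pr hcn) add0r.
  by apply: ltr_wpDl (zval_ge0 _ _) _; rewrite ltz_nat (vfact_top_strict p_pr hdvd).
Qed.

Lemma laguerre_no_factor_of_degree :
  (p %| \prod_(1 <= i < k.+1) ((n - k + i) * (a + (n - k) + i)))%N ->
  ~ has_factor_of_degree (laguerre n a) k.
Proof.
move=> /(prime_dvd_prod _ _ p_pr) [i0 hi0 hdvd].
have [i0_gt0 _] := andP hi0.
have scale_nz : ((n + a)`!%:R / n`!%:R : rat) != 0.
  by rewrite mulf_neq0 ?invr_eq0 // pnatr_eq0 -lt0n fact_gt0.
rewrite laguerre_fna => /(has_factor_scale scale_nz).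
set c := fun j : nat => _.
have vc j : zval p (c j) = (logn p 'C(n, j))%:Z by apply: zval_sign_nat.
have c_nz j : (j <= n)%N -> c j != 0.
  by move=> jn; rewrite mulf_eq0 signr_eq0 /= eqz_nat -lt0n bin_gt0.
apply: (fna_no_factor (l := (k - i0)%N) p_pr k_gt0 kp _ no_carry_i hsize
          (c_nz _ (leq0n n)) _ (c_nz _ (leqnn n))).
- by rewrite ltn_subrL i0_gt0.
- by rewrite vc bin0 logn1.
- move=> j jn _; rewrite !vc binn logn1 add0r.
  by apply: ler_wpDl => //; rewrite lez_nat vfact_mono ?leq_add2r.
- move=> j hj _; rewrite !vc binn logn1 add0r -PoszD ltz_nat.
  exact: laguerre_top_strict p_pr hdvd hi0 kn hj.
Qed.

End Parts.

Theorem lemma1p1 (a n k : nat) (ha : (0 < a)%N) (hk1 : (1 <= k)%N)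
    (hkn : (k.*2 <= n)%N) :
  let u0 : rat := (a%:R / k%:R)%R in
  (forall (c : nat -> int) (p : nat),
      prime p -> (k + 2 <= p)%N ->
      (p %| \prod_(1 <= i < k.+1) (a + (n - k) + i))%N ->
      ~~ (p%:Z %| (c 0%N * c n)%R)%Z ->
      ~~ (p %| \prod_(1 <= i < k.+1) (a + i))%N ->
      ((Num.min (2 * u0) (k%:R + u0) <= p%:R)%R
         \/ ((2 * k < p)%N /\ (a <= p ^ 2 - p)%N)) ->
      ~ has_factor_of_degree (fna n a c) k)
  /\
  (forall p : nat,
      prime p -> (k + 2 <= p)%N ->
      (p %| \prod_(1 <= i < k.+1) ((n - k + i) * (a + (n - k) + i)))%N ->
      ~~ (p %| \prod_(1 <= i < k.+1) (a + i))%N ->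
      ((Num.min (2 * u0) (k%:R + u0) <= p%:R)%R
         \/ ((2 * k < p)%N /\ (a <= p ^ 2 - p)%N)) ->
      ~ has_factor_of_degree (laguerre n a) k).
Proof.
have kn : (k <= n)%N by rewrite -addnn in hkn; lia.
have size_cond p : ((Num.min (2 * (a%:R / k%:R)) (k%:R + a%:R / k%:R) <= p%:R :> rat)%R
    \/ ((2 * k < p)%N /\ (a <= p ^ 2 - p)%N)) -> size_condition p a k.
  by case=> [/(size_condition_rat hk1) h | h]; [left | right].
move=> u0; split=> [c p | p] p_pr kp hdvd.
- move=> hc no_carry /size_cond hsize.
  exact: fna_no_factor_of_degree p_pr hk1 kn kp hsize no_carry c hdvd hc.
- move=> no_carry /size_cond hsize.
  exact: laguerre_no_factor_of_degree p_pr hk1 kn kp hsize no_carry hdvd.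
Qed.
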